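(* Let $\mathcal I$ be an independent family. The following are equivalent: (1) $\mathcal I$ is densely maximal; (2) $\mathcal I$ has a unique diagonalization filter, and it equals the density filter $\mathrm{fil}(\mathcal I)$.
   Context: A family $\mathcal I \subseteq [\omega]^\omega$ is independent if for all finite disjoint $\mathcal A, \mathcal B \subseteq \mathcal I$ the set $\bigcap \mathcal A \setminus \bigcup \mathcal B$ is infinite. $\mathsf{FF}(\mathcal I)$ is the set of finite partial functions $h:\mathcal I \to 2$; $\mathcal I^h := \bigcap_{A \in \mathrm{dom}(h)} A^{h(A)}$ with $A^0 = A$, $A^1 = \omega\setminus A$. $\mathcal I$ is densely maximal if for every $X \in [\omega]^\omega$ and every $h \in \mathsf{FF}(\mathcal I)$ there is $h' \supseteq h$ in $\mathsf{FF}(\mathcal I)$ with $\mathcal I^{h'} \setminus X$ or $\mathcal I^{h'} \cap X$ finite. The density filter $\mathrm{fil}(\mathcal I)$ is the set of $X \in [\omega]^\omega$ such that for every $h \in \mathsf{FF}(\mathcal I)$ there is $h' \supseteq h$ in $\mathsf{FF}(\mathcal I)$ with $\mathcal I^{h'} \setminus X$ finite. A diagonalization filter for $\mathcal I$ is a filter $\mathcal F$ on $\omega$ which is maximal (under inclusion) with respect to the property that every $X\in\mathcal F$ has infinite intersection with every $\mathcal I^h$, $h \in \mathsf{FF}(\mathcal I)$. *)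

From Stdlib Require Import List.
Import ListNotations.

Definition sset := nat -> Prop.

Definition finite_set (X : sset) : Prop := exists N, forall n, X n -> n < N.
Definition infinite_set (X : sset) : Prop := ~ finite_set X.

Definition cap_minus_cup (As Bs : list sset) : sset :=
  fun n => (forall A, In A As -> A n) /\ (forall B, In B Bs -> ~ B n).

Definition independent (I : sset -> Prop) : Prop :=
  (forall A, I A -> infinite_set A) /\
  forall As Bs : list sset,
    (forall A, In A As -> I A) -> (forall B, In B Bs -> I B) ->
    (forall X, In X As -> ~ In X Bs) ->
    infinite_set (cap_minus_cup As Bs).

(* Finite partial functions h : I -> 2, as finite graphs (lists of pairs);
   the boolean false stands for 0 and true for 1. *)
Definition FF (I : sset -> Prop) (h : list (sset * bool)) : Prop :=
  (forall A b, In (A, b) h -> I A) /\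
  (forall A b c, In (A, b) h -> In (A, c) h -> b = c).

Definition power (A : sset) (b : bool) : sset :=
  fun n => if b then ~ A n else A n.

Definition Ih (h : list (sset * bool)) : sset :=
  fun n => forall A b, In (A, b) h -> power A b n.

Definition extends (h' h : list (sset * bool)) : Prop :=
  forall p, In p h -> In p h'.

Definition diff (X Y : sset) : sset := fun n => X n /\ ~ Y n.
Definition inter (X Y : sset) : sset := fun n => X n /\ Y n.

Definition densely_maximal (I : sset -> Prop) : Prop :=
  forall X : sset, infinite_set X ->
  forall h, FF I h ->
  exists h', FF I h' /\ extends h' h /\
    (finite_set (diff (Ih h') X) \/ finite_set (inter (Ih h') X)).

Definition fil (I : sset -> Prop) : sset -> Prop :=
  fun X => infinite_set X /\
    forall h, FF I h -> exists h', FF I h' /\ extends h' h /\ finite_set (diff (Ih h') X).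

Definition is_filter (F : sset -> Prop) : Prop :=
  F (fun _ => True) /\
  ~ F (fun _ => False) /\
  (forall X Y, F X -> (forall n, X n -> Y n) -> F Y) /\
  (forall X Y, F X -> F Y -> F (inter X Y)).

Definition meets_all_Ih (I : sset -> Prop) (F : sset -> Prop) : Prop :=
  forall X, F X -> forall h, FF I h -> infinite_set (inter X (Ih h)).

Definition diagonalization_filter (I : sset -> Prop) (F : sset -> Prop) : Prop :=
  is_filter F /\ meets_all_Ih I F /\
  forall G, is_filter G -> meets_all_Ih I G -> (forall X, F X -> G X) ->
    forall X, G X -> F X.

From Stdlib Require Import List Classical Lia.
Import ListNotations.

(* The engine of the proof is an absorption principle: a diagonalization
   filter F contains every set X that is "positive" for F, i.e. such that
   Y ∩ X ∩ I^h is infinite for all Y ∈ F and h ∈ FF(I), since the filter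
   generated by F and X still meets every I^h and maximality applies.
   From it we get, for any independent I:
   - fil(I) is a filter meeting every I^h (each I^h is infinite by
     independence), and fil(I) ⊆ F for every diagonalization filter F;
   - under dense maximality every set meeting all I^h lies in fil(I), so
     fil(I) is maximal and contains every diagonalization filter: (1) ⇒ (2);
   - if fil(I) is a diagonalization filter and X splits every I^{h'}, h' ⊇ h,
     into two infinite parts, then both X ∪ (ω \ I^h) and (ω \ X) ∪ (ω \ I^h)
     are positive, hence in fil(I); their intersection misses I^h, which
     contradicts fil(I) meeting I^h: (2) ⇒ (1). *)

Lemma finite_sub (X Y : sset) :
  (forall n, X n -> Y n) -> finite_set Y -> finite_set X.
Proof. intros HXY [N HN]. exists N. intros n Hn. apply HN, HXY, Hn. Qed.

Lemma finite_empty : finite_set (fun _ => False).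
Proof. exists 0. intros n []. Qed.

Lemma finite_union (X Y : sset) :
  finite_set X -> finite_set Y -> finite_set (fun n => X n \/ Y n).
Proof.
  intros [N HN] [M HM]. exists (N + M). intros n [Hn | Hn].
  - specialize (HN n Hn); lia.
  - specialize (HM n Hn); lia.
Qed.

Lemma infinite_cover (A B C : sset) :
  infinite_set A -> finite_set B -> (forall n, A n -> C n \/ B n) ->
  infinite_set C.
Proof.
  intros HA HB Hcov HC. apply HA.
  eapply finite_sub; [exact Hcov | apply finite_union; assumption].
Qed.

Lemma omega_infinite : infinite_set (fun _ => True).
Proof. intros [N HN]. specialize (HN N I). lia. Qed.

Lemma Ih_extends (h' h : list (sset * bool)) (n : nat) :
  extends h' h -> Ih h' n -> Ih h n.
Proof. intros Hext Hn A b Hin. apply Hn, Hext, Hin. Qed.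

Lemma FF_nil (I : sset -> Prop) : FF I [].
Proof. split; intros; simpl in *; contradiction. Qed.

Lemma FF_glue_or_disjoint (I : sset -> Prop) (h' h : list (sset * bool)) :
  FF I h' -> FF I h ->
  FF I (h' ++ h) \/ (forall n, Ih h' n -> ~ Ih h n).
Proof.
  intros [Hdom' Hfun'] [Hdom Hfun].
  destruct (classic (exists A b c, In (A, b) h' /\ In (A, c) h /\ b <> c))
    as [[A [b [c [Hb [Hc Hbc]]]]] | Hagree].
  - right. intros n Hn' Hn.
    specialize (Hn' _ _ Hb). specialize (Hn _ _ Hc). unfold power in *.
    destruct b, c; tauto.
  - left. assert (Hcompat : forall A b c, In (A, b) h' -> In (A, c) h -> b = c).
    { intros A b c Hb Hc. apply NNPP. intro Hbc. apply Hagree. eauto 6. }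
    split.
    + intros A b Hin. apply in_app_iff in Hin as [Hin | Hin]; eauto.
    + intros A b c Hb Hc.
      apply in_app_iff in Hb as [Hb | Hb]; apply in_app_iff in Hc as [Hc | Hc];
        eauto. symmetry; eauto.
Qed.

(* Each I^h is infinite: it is ⋂A \ ⋃B for A = h^{-1}(0), B = h^{-1}(1). *)
Lemma Ih_infinite (I : sset -> Prop) (h : list (sset * bool)) :
  independent I -> FF I h -> infinite_set (Ih h).
Proof.
  intros [_ Hind] [Hdom Hfun].
  set (As := map fst (filter (fun p => negb (snd p)) h)).
  set (Bs := map fst (filter (fun p => snd p) h)).
  assert (HAs : forall A, In A As <-> In (A, false) h).
  { intros A. unfold As. rewrite in_map_iff. split.
    - intros [[A' b] [<- Hf]]. apply filter_In in Hf as [Hf Hb].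
      destruct b; [discriminate | exact Hf].
    - intros Hin. exists (A, false). split; [reflexivity | apply filter_In; auto]. }
  assert (HBs : forall B, In B Bs <-> In (B, true) h).
  { intros B. unfold Bs. rewrite in_map_iff. split.
    - intros [[B' b] [<- Hf]]. apply filter_In in Hf as [Hf Hb].
      destruct b; [exact Hf | discriminate].
    - intros Hin. exists (B, true). split; [reflexivity | apply filter_In; auto]. }
  assert (Hinf : infinite_set (cap_minus_cup As Bs)).
  { apply Hind.
    - intros A HA. apply HAs in HA. eauto.
    - intros B HB. apply HBs in HB. eauto.
    - intros X HA HB. apply HAs in HA. apply HBs in HB.
      discriminate (Hfun _ _ _ HA HB). }
  intros Hfin. apply Hinf. eapply finite_sub; [| exact Hfin].
  intros n [HnA HnB] A [|] Hin; unfold power.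
  - apply HnB, HBs, Hin.
  - apply HnA, HAs, Hin.
Qed.

Definition positive (I F : sset -> Prop) (X : sset) : Prop :=
  forall Y h, F Y -> FF I h -> infinite_set (fun n => Y n /\ X n /\ Ih h n).

Definition adjoin (F : sset -> Prop) (X : sset) : sset -> Prop :=
  fun W => exists Y, F Y /\ forall n, Y n -> X n -> W n.

Section Adjoin.

Variables (I F : sset -> Prop) (X : sset).
Hypotheses (HF : is_filter F) (HX : positive I F X).

Lemma adjoin_meets_all_Ih : meets_all_Ih I (adjoin F X).
Proof.
  intros W [Y [FY HYW]] h Hh Hfin. apply (HX Y h FY Hh).
  eapply finite_sub; [| exact Hfin]. intros n (HYn & HXn & Hhn). split; auto.
Qed.

Lemma adjoin_is_filter : is_filter (adjoin F X).
Proof.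
  destruct HF as [Htop [_ [_ Hcap]]].
  split; [| split; [| split]].
  - exists (fun _ => True). auto.
  - intros Hbot. apply (adjoin_meets_all_Ih _ Hbot [] (FF_nil I)).
    apply finite_sub with (Y := fun _ => False); [intros n [[] _] | apply finite_empty].
  - intros W W' [Y [FY HYW]] HWW'. exists Y. auto.
  - intros W W' [Y [FY HYW]] [Y' [FY' HYW']]. exists (inter Y Y').
    split; [auto | intros n [HYn HY'n] HXn; split; auto].
Qed.

End Adjoin.

Lemma diag_absorbs_positive (I F : sset -> Prop) (X : sset) :
  diagonalization_filter I F -> positive I F X -> F X.
Proof.
  intros [HF [_ Hmax]] HX.
  apply (Hmax (adjoin F X) (adjoin_is_filter I F X HF HX)
              (adjoin_meets_all_Ih I F X HX)).
  - intros Y FY. exists Y. auto.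
  - exists (fun _ => True). split; [apply HF | auto].
Qed.

Section DensityFilter.

Variable I : sset -> Prop.
Hypothesis Hind : independent I.

Lemma fil_is_filter : is_filter (fil I).
Proof.
  split; [| split; [| split]].
  - split; [apply omega_infinite |]. intros h Hh. exists h.
    split; [exact Hh | split; [intros p Hp; exact Hp |]].
    apply finite_sub with (Y := fun _ => False); [intros n [_ Hn]; exact (Hn Logic.I) | apply finite_empty].
  - intros [Hinf _]. apply Hinf, finite_empty.
  - intros X Y [HXinf HXdense] HXY. split.
    + intros Hfin. apply HXinf. eapply finite_sub; eauto.
    + intros h Hh. destruct (HXdense h Hh) as [h' (Hh' & Hext & Hfin)].
      exists h'. split; [exact Hh' | split; [exact Hext |]].
      eapply finite_sub; [| exact Hfin]. intros n [Hn HYn]. split; auto.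
  - intros X Y [_ HXdense] [_ HYdense].
    assert (Hdense : forall h, FF I h -> exists h', FF I h' /\ extends h' h /\
                       finite_set (diff (Ih h') (inter X Y))).
    { intros h Hh. destruct (HXdense h Hh) as [h1 (Hh1 & Hext1 & Hfin1)].
      destruct (HYdense h1 Hh1) as [h2 (Hh2 & Hext2 & Hfin2)].
      exists h2. split; [exact Hh2 | split; [intros p Hp; auto |]].
      eapply finite_sub; [| apply (finite_union _ _ Hfin1 Hfin2)].
      intros n [Hn HnXY]. destruct (classic (X n)) as [HXn | HXn].
      - right. split; [exact Hn | intros HYn; apply HnXY; split; auto].
      - left. split; [eapply Ih_extends; eauto | exact HXn]. }
    split; [| exact Hdense].
    destruct (Hdense [] (FF_nil I)) as [h' (Hh' & _ & Hfin)].
    eapply infinite_cover; [apply (Ih_infinite I h' Hind Hh') | exact Hfin |].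
    intros n Hn. destruct (classic (inter X Y n)); [left | right]; auto. split; auto.
Qed.

Lemma fil_meets_all_Ih : meets_all_Ih I (fil I).
Proof.
  intros X [_ HXdense] h Hh. destruct (HXdense h Hh) as [h' (Hh' & Hext & Hfin)].
  eapply infinite_cover; [apply (Ih_infinite I h' Hind Hh') | exact Hfin |].
  intros n Hn. destruct (classic (X n)); [left | right].
  - split; [assumption | eapply Ih_extends; eauto].
  - split; assumption.
Qed.

(* fil(I) is contained in every diagonalization filter: each of its members
   is positive, because below any I^h it covers some I^{h'} up to finitely
   many points. *)
Lemma fil_sub_diag (F : sset -> Prop) (X : sset) :
  diagonalization_filter I F -> fil I X -> F X.
Proof.
  intros HF [_ HXdense]. apply (diag_absorbs_positive _ _ _ HF).
  intros Y h FY Hh. destruct HF as [_ [HFmeets _]].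
  destruct (HXdense h Hh) as [h' (Hh' & Hext & Hfin)].
  eapply infinite_cover; [apply (HFmeets Y FY h' Hh') | exact Hfin |].
  intros n [HYn Hh'n]. destruct (classic (X n)); [left | right].
  - split; [| split]; [assumption | assumption | eapply Ih_extends; eauto].
  - split; assumption.
Qed.

Lemma fil_contains_dense_below (h : list (sset * bool)) (Z : sset) :
  diagonalization_filter I (fil I) -> FF I h ->
  (forall h', FF I h' -> extends h' h -> infinite_set (inter (Ih h') Z)) ->
  fil I (fun n => Z n \/ ~ Ih h n).
Proof.
  intros Hdiag Hh HZ. apply (diag_absorbs_positive _ _ _ Hdiag).
  intros V h'' HV Hh''.
  destruct (FF_glue_or_disjoint I h'' h Hh'' Hh) as [Hglue | Hdisj].
  - (* below I^(h''++h), V covers all but finitely many points, and Z is dense *)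
    destruct HV as [_ HVdense].
    destruct (HVdense _ Hglue) as [h4 (Hh4 & Hext4 & Hfin)].
    assert (Hext_h : extends h4 h) by (intros p Hp; apply Hext4, in_app_iff; auto).
    assert (Hext_h'' : extends h4 h'') by (intros p Hp; apply Hext4, in_app_iff; auto).
    eapply infinite_cover; [apply (HZ h4 Hh4 Hext_h) | exact Hfin |].
    intros n [Hh4n HZn]. destruct (classic (V n)); [left | right].
    + split; [| split]; [assumption | left; assumption | eapply Ih_extends; eauto].
    + split; assumption.
  - (* I^h'' lies outside I^h, so V ∩ I^h'' is already contained in the set *)
    destruct Hdiag as [_ [Hmeets _]].
    eapply infinite_cover; [apply (Hmeets V HV h'' Hh'') | apply finite_empty |].
    intros n [HVn Hh''n]. left. split; [| split]; auto.
Qed.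

End DensityFilter.

(* Under dense maximality, every set meeting all I^h belongs to fil(I):
   splitting it against I^h can never leave I^{h'} ∩ X finite. *)
Lemma densely_maximal_fil (I : sset -> Prop) (X : sset) :
  densely_maximal I ->
  (forall h, FF I h -> infinite_set (inter X (Ih h))) -> fil I X.
Proof.
  intros Hdm HX.
  assert (HXinf : infinite_set X).
  { intros Hfin. apply (HX [] (FF_nil I)).
    eapply finite_sub; [| exact Hfin]. intros n [HXn _]; exact HXn. }
  split; [exact HXinf |].
  intros h Hh. destruct (Hdm X HXinf h Hh) as [h' (Hh' & Hext & [Hfin | Hfin])].
  - exists h'. auto.
  - exfalso. apply (HX h' Hh').
    eapply finite_sub; [| exact Hfin]. intros n [HXn Hn]. split; assumption.
Qed.

Theorem lemma2p3 (I : sset -> Prop) :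
  independent I ->
  (densely_maximal I <->
   (diagonalization_filter I (fil I) /\
    forall F, diagonalization_filter I F -> forall X, F X <-> fil I X)).
Proof.
  intros Hind. split.
  - intros Hdm.
    assert (Hdiag : diagonalization_filter I (fil I)).
    { split; [apply fil_is_filter, Hind | split; [apply fil_meets_all_Ih, Hind |]].
      intros G _ HGmeets _ X GX. apply densely_maximal_fil; [exact Hdm |].
      exact (HGmeets X GX). }
    split; [exact Hdiag |]. intros F HF X. split.
    + intros FX. apply densely_maximal_fil; [exact Hdm |].
      destruct HF as [_ [HFmeets _]]. exact (HFmeets X FX).
    + apply fil_sub_diag; assumption.
  - intros [Hdiag _] X _ h Hh. apply NNPP. intros Hno.
    assert (Hsplit : forall h', FF I h' -> extends h' h ->
      infinite_set (diff (Ih h') X) /\ infinite_set (inter (Ih h') X)).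
    { intros h' Hh' Hext. split; intros Hfin; apply Hno; exists h'; auto. }
    assert (HinX : fil I (fun n => X n \/ ~ Ih h n)).
    { apply fil_contains_dense_below; try assumption.
      intros h' Hh' Hext. apply (Hsplit h' Hh' Hext). }
    assert (HoutX : fil I (fun n => ~ X n \/ ~ Ih h n)).
    { apply fil_contains_dense_below; try assumption.
      intros h' Hh' Hext. apply (Hsplit h' Hh' Hext). }
    destruct (fil_is_filter I Hind) as [_ [_ [_ Hcap]]].
    apply (fil_meets_all_Ih I Hind _ (Hcap _ _ HinX HoutX) h Hh).
    apply finite_sub with (Y := fun _ => False); [| apply finite_empty].
    intros n [[[HXn | Hn] [HnX | Hn']] Hhn]; tauto.
Qed.
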